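(* Let $q$ be a prime power with $q\not\equiv -1\pmod 3$, let $G=\mathrm{SU}_3(q)$, and let $\mathcal{C}$ be the $G$-conjugacy class $C_3^{(0,0)}$. Then $K_{\mathcal{C}}$ is irreducible.
   Context: $\mathrm{SU}_3(q)$ is the group of determinant-one matrices $M\in\mathrm{GL}_3(q^2)$ with $M^*JM=J$, where $J$ has ones on the anti-diagonal and zeros elsewhere and $M^*$ is the transpose of $M$ with every entry raised to the $q$-th power. $C_3^{(0,0)}$ is the $\mathrm{SU}_3(q)$-conjugacy class of $\begin{pmatrix}1&1&\alpha\\0&1&-1\\0&0&1\end{pmatrix}$ where $\alpha\in\mathbb{F}_{q^2}^\times$ satisfies $\alpha+\alpha^q+1=0$. For a finite group $G$ and a subset $\mathcal{C}\subseteq G\setminus\{1\}$ closed under conjugation, the Killing form is $K_{\mathcal{C}}(a,b)=|C_G(ab)\cap\mathcal{C}|$ on the basis $\mathcal{C}$; it is irreducible if the graph with vertex set $\mathcal{C}$, in which distinct $a,b$ are adjacent iff $C_G(ab)\cap\mathcal{C}\neq\emptyset$, is connected. *)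

From mathcomp Require Import all_boot all_order all_algebra all_field.
Set Implicit Arguments. Unset Strict Implicit. Unset Printing Implicit Defensive.
Import GRing.Theory.
Local Open Scope ring_scope.

Definition prime_power (q : nat) : Prop :=
  exists p k : nat, [/\ prime p, (0 < k)%N & q = (p ^ k)%N].

Section SU3.
Variable F : finFieldType.

Definition Jmx : 'M[F]_3 := \matrix_(i < 3, j < 3) (if (i + j == 2)%N then 1 else 0).

Definition hstar (q : nat) (M : 'M[F]_3) : 'M[F]_3 := map_mx (fun x => x ^+ q) M^T.

(* SU_3(q) inside GL_3(F), F = F_{q^2} *)
Definition SU3 (q : nat) : {set 'M[F]_3} :=
  [set M : 'M[F]_3 | (hstar q M *m Jmx *m M == Jmx) && (\det M == 1)].

Definition u3 (a : F) : 'M[F]_3 :=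
  \matrix_(i < 3, j < 3)
    match nat_of_ord i, nat_of_ord j with
    | 0, 0 => 1 | 0, 1 => 1 | 0, 2 => a
    | 1, 1 => 1 | 1, 2 => -1
    | 2, 2 => 1
    | _, _ => 0
    end.

Definition mx_class (G : {set 'M[F]_3}) (x : 'M[F]_3) : {set 'M[F]_3} :=
  [set invmx g *m x *m g | g in G].

Definition cent_meets (G C : {set 'M[F]_3}) (y : 'M[F]_3) : bool :=
  [exists c, [&& c \in G, c \in C & c *m y == y *m c]].

Definition killing_adj (G C : {set 'M[F]_3}) : rel 'M[F]_3 :=
  fun a b => [&& a \in C, b \in C, a != b & cent_meets G C (a *m b)].

(* K_C irreducible: the graph on vertex set C is connected *)
Definition killing_irreducible (G C : {set 'M[F]_3}) : Prop :=
  forall a b, a \in C -> b \in C -> connect (killing_adj G C) a b.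

End SU3.

From HB Require Import structures.
From mathcomp Require Import all_boot all_order all_algebra all_field.
From mathcomp Require Import ring zify.
Set Implicit Arguments. Unset Strict Implicit. Unset Printing Implicit Defensive.
Import GRing.Theory.
Local Open Scope ring_scope.

(* Let x := u3 alpha, let B be the stabiliser in SU_3(q) of the isotropic line
   spanned by e1, and let W be the antidiagonal Weyl element.  Call g linked
   when x and x^g lie in one component of the graph.  Linked elements are closed
   under products, so by the Bruhat decomposition SU_3(q) = B \cup U W B it is
   enough that the elements of B and W are linked.  For g in B both x and x^g
   fix e1, hence so does x x^g, which is then a unipotent element u(b,d); it
   commutes with x when b = 0, and with itself when b <> 0, in which case it is
   B-conjugate to x.  This last fact needs a |-> a^(q-2) to be onto F^*, that
   is gcd(q-2, q^2-1) = 1, which is where q <> 2 (mod 3) enters.  For W one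
   finds k in B such that x x^(kW) fixes an explicit isotropic vector. *)

Section Matrix3.
Variable R : comPzRingType.

Definition o0 : 'I_3 := @Ordinal 3 0 isT.
Definition o1 : 'I_3 := @Ordinal 3 1 isT.
Definition o2 : 'I_3 := @Ordinal 3 2 isT.

Definition mx3 (a b c d e f g h i : R) : 'M[R]_3 :=
  \matrix_(r < 3, s < 3)
    match nat_of_ord r, nat_of_ord s with
    | 0, 0 => a | 0, 1 => b | 0, _ => c
    | 1, 0 => d | 1, 1 => e | 1, _ => f
    | _, 0 => g | _, 1 => h | _, _ => i
    end.

Lemma mx3_eta (A : 'M[R]_3) :
  A = mx3 (A o0 o0) (A o0 o1) (A o0 o2) (A o1 o0) (A o1 o1) (A o1 o2)
          (A o2 o0) (A o2 o1) (A o2 o2).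
Proof.
apply/matrixP => -[[|[|[|r]]] Hr] [[|[|[|s]]] Hs]; rewrite !mxE //=;
  by congr (A _ _); apply/val_inj.
Qed.

Lemma mx3_inj a b c d e f g h i a' b' c' d' e' f' g' h' i' :
  mx3 a b c d e f g h i = mx3 a' b' c' d' e' f' g' h' i' ->
  [/\ [/\ a = a', b = b' & c = c'], [/\ d = d', e = e' & f = f']
    & [/\ g = g', h = h' & i = i']].
Proof.
move=> E; have Eij r s := congr1 (fun M : 'M[R]_3 => M r s) E.
move: (Eij o0 o0) (Eij o0 o1) (Eij o0 o2) (Eij o1 o0) (Eij o1 o1) (Eij o1 o2)
      (Eij o2 o0) (Eij o2 o1) (Eij o2 o2); rewrite !mxE /=.
by do 9 move=> ->.
Qed.

Lemma mul_mx3 a b c d e f g h i a' b' c' d' e' f' g' h' i' :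
  mx3 a b c d e f g h i *m mx3 a' b' c' d' e' f' g' h' i' =
  mx3 (a*a' + b*d' + c*g') (a*b' + b*e' + c*h') (a*c' + b*f' + c*i')
      (d*a' + e*d' + f*g') (d*b' + e*e' + f*h') (d*c' + e*f' + f*i')
      (g*a' + h*d' + i*g') (g*b' + h*e' + i*h') (g*c' + h*f' + i*i').
Proof.
apply/matrixP => -[[|[|[|r]]] Hr] [[|[|[|s]]] Hs]; rewrite !mxE //=;
  by rewrite !big_ord_recr big_ord0 /= !mxE /= add0r.
Qed.

Lemma det_mx3 a b c d e f g h i :
  \det (mx3 a b c d e f g h i) =
  a * (e * i - f * h) - b * (d * i - f * g) + c * (d * h - e * g).
Proof.
rewrite (expand_det_row _ o0) !big_ord_recr big_ord0 /= add0r.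
rewrite /cofactor !(expand_det_row _ ord0) !big_ord_recr big_ord0 /= !add0r.
rewrite /cofactor !det_mx11 !mxE /= !big_ord0 !add0r.
rewrite !add0n !expr0 !expr1 !mul1r !mulN1r /=.
ring.
Qed.

Lemma scale_mx3 k a b c d e f g h i :
  k *: mx3 a b c d e f g h i =
  mx3 (k * a) (k * b) (k * c) (k * d) (k * e) (k * f) (k * g) (k * h) (k * i).
Proof. by rewrite [LHS]mx3_eta !mxE. Qed.

Lemma mx3_1 : 1%:M = mx3 1 0 0 0 1 0 0 0 1.
Proof. by rewrite [LHS]mx3_eta !mxE. Qed.

Lemma mx3_eq a b c d e f g h i a' b' c' d' e' f' g' h' i' :
  a = a' -> b = b' -> c = c' -> d = d' -> e = e' -> f = f' ->
  g = g' -> h = h' -> i = i' ->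
  mx3 a b c d e f g h i = mx3 a' b' c' d' e' f' g' h' i'.
Proof. by move=> -> -> -> -> -> -> -> -> ->. Qed.

End Matrix3.

Local Notation "a ^^ g" := (invmx g *m a *m g) (at level 30).

Lemma invmxM (R : comUnitRingType) n (A B : 'M[R]_n) :
  A \in unitmx -> B \in unitmx -> invmx (A *m B) = invmx B *m invmx A.
Proof.
move=> uA uB; have uAB : A *m B \in unitmx by rewrite unitmx_mul uA uB.
have inv : A *m B *m (invmx B *m invmx A) = 1%:M.
  by rewrite mulmxA mulmxK // mulmxV.
by rewrite -[LHS]mulmx1 -inv mulmxA mulVmx // mul1mx.
Qed.

Section ClassGraph.
Variable F : finFieldType.

Definition mx_group (G : {set 'M[F]_3}) :=
  [/\ {subset G <= unitmx}, {in G &, forall g h, g *m h \in G}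
    & {in G, forall g, invmx g \in G}].

Variables (G : {set 'M[F]_3}) (x : 'M[F]_3).
Hypothesis G_group : mx_group G.
Hypothesis xG : x \in G.

Let G_unitmx : {subset G <= unitmx}. Proof. by case: G_group. Qed.
Let G_mul : {in G &, forall g h, g *m h \in G}. Proof. by case: G_group. Qed.
Let G_inv : {in G, forall g, invmx g \in G}. Proof. by case: G_group. Qed.

Local Notation C := (mx_class G x).
Local Notation adj := (killing_adj G C).

Lemma conjmxM g h a : g \in G -> h \in G -> (a ^^ g) ^^ h = a ^^ (g *m h).
Proof. by move=> gG hG; rewrite invmxM ?G_unitmx // !mulmxA. Qed.

Lemma conjmx_mul h a b : h \in G -> (a ^^ h) *m (b ^^ h) = (a *m b) ^^ h.
Proof. by move=> hG; rewrite !mulmxA mulmxK ?G_unitmx. Qed.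

Lemma conjmx_inj h : h \in G -> injective (fun a => a ^^ h).
Proof.
move=> hG a b /(congr1 (fun M => h *m M *m invmx h)).
by rewrite !mulmxA !mulmxV ?G_unitmx // !mul1mx !mulmxK ?G_unitmx.
Qed.

Lemma mem_mx_class g : g \in G -> x ^^ g \in C.
Proof. by move=> gG; apply/imsetP; exists g. Qed.

Lemma mx_class_refl : x \in C.
Proof.
have G1 : 1%:M \in G by rewrite -(mulmxV (G_unitmx xG)) G_mul ?G_inv.
by have := mem_mx_class G1; rewrite invmx1 mul1mx mulmx1.
Qed.

Lemma mx_class_sub : {subset C <= G}.
Proof. by move=> _ /imsetP[g gG ->]; rewrite !G_mul ?G_inv. Qed.

Lemma mx_class_conj a h : a \in C -> h \in G -> a ^^ h \in C.
Proof. by case/imsetP=> g gG -> hG; rewrite conjmxM ?mem_mx_class ?G_mul. Qed.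

Lemma cent_meets_intro c y : c \in C -> c *m y = y *m c -> cent_meets G C y.
Proof.
by move=> cC cy; apply/existsP; exists c; rewrite mx_class_sub // cC cy eqxx.
Qed.

Lemma cent_meets_conj y h : cent_meets G C y -> h \in G -> cent_meets G C (y ^^ h).
Proof.
case/existsP=> c /and3P[_ cC /eqP cy] hG.
by apply: (cent_meets_intro (mx_class_conj cC hG)); rewrite !conjmx_mul // cy.
Qed.

Lemma killing_adj_conj h a b : h \in G -> adj a b -> adj (a ^^ h) (b ^^ h).
Proof.
move=> hG /and4P[aC bC ab cm]; apply/and4P; split; rewrite ?mx_class_conj //.
  by apply: contra ab => /eqP /(conjmx_inj hG) ->.
by rewrite conjmx_mul // cent_meets_conj.
Qed.

Lemma connect_killing_conj h a b : h \in G -> connect adj a b ->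
  connect adj (a ^^ h) (b ^^ h).
Proof.
move=> hG /connectP[p pth ->] {b}; elim: p a pth => [|c p IHp] a /=.
  by rewrite connect0.
case/andP=> ac pc; apply: connect_trans (IHp _ pc).
by apply: connect1; apply: killing_adj_conj.
Qed.

Lemma killing_adj_sym : symmetric adj.
Proof.
suff adjC a b : adj a b -> adj b a by move=> a b; apply/idP/idP; apply: adjC.
move=> /and4P[aC bC ab cm]; apply/and4P; split; rewrite 1?eq_sym //.
have aG := mx_class_sub aC.
by have := cent_meets_conj cm aG; rewrite !mulmxA mulVmx ?G_unitmx ?mul1mx.
Qed.

Definition class_linked g := connect adj x (x ^^ g).

Lemma class_linkedM g h : g \in G -> h \in G ->
  class_linked g -> class_linked h -> class_linked (g *m h).
Proof.
move=> gG hG Lg Lh; rewrite /class_linked -conjmxM //.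
by apply: connect_trans Lh _; apply: connect_killing_conj.
Qed.

Lemma killing_irreducible_linked :
  {in G, forall g, class_linked g} -> killing_irreducible G C.
Proof.
move=> linked _ _ /imsetP[g gG ->] /imsetP[h hG ->].
apply: connect_trans (linked h hG).
by rewrite (sym_connect_sym killing_adj_sym); apply: linked.
Qed.

End ClassGraph.

Section SU3.
Variables (F : finFieldType) (q : nat).
Hypothesis q_pchar : [pchar F].-nat q.
Hypothesis cardF : #|F| = (q ^ 2)%N.

Definition qconj (x : F) := x ^+ q.
Local Notation bar := qconj.

Fact qconj_is_zmod_morphism : zmod_morphism qconj.
Proof.
move=> x y; apply: (addIr (y ^+ q)).
by rewrite /qconj subrK -exprDn_pchar // subrK.
Qed.

Fact qconj_is_monoid_morphism : monoid_morphism qconj.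
Proof. by split=> [|x y]; rewrite /qconj ?expr1n ?exprMn. Qed.

HB.instance Definition _ := GRing.isZmodMorphism.Build F F qconj qconj_is_zmod_morphism.
HB.instance Definition _ := GRing.isMonoidMorphism.Build F F qconj qconj_is_monoid_morphism.

Lemma qconjK : involutive bar.
Proof. by move=> x; rewrite /qconj -exprM mulnn -cardF expf_card. Qed.

Lemma hstar_qconj (M : 'M[F]_3) : hstar q M = map_mx bar M^T.
Proof. by []. Qed.

Lemma hstarM (A B : 'M[F]_3) : hstar q (A *m B) = hstar q B *m hstar q A.
Proof. by rewrite !hstar_qconj trmx_mul map_mxM. Qed.

Lemma hstar1 : hstar q (1%:M : 'M[F]_3) = 1%:M.
Proof. by rewrite hstar_qconj trmx1 map_mx1. Qed.

Lemma hstar_mx3 a b c d e f g h i :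
  hstar q (mx3 a b c d e f g h i) =
  mx3 (bar a) (bar d) (bar g) (bar b) (bar e) (bar h) (bar c) (bar f) (bar i).
Proof. by rewrite [LHS]mx3_eta !mxE. Qed.

Local Notation G := (SU3 F q).

Lemma SU3P M :
  reflect (hstar q M *m Jmx F *m M = Jmx F /\ \det M = 1) (M \in G).
Proof. by rewrite inE; apply: (iffP andP) => -[/eqP-> /eqP->]. Qed.

Lemma SU3_unitmx : {subset G <= unitmx}.
Proof. by move=> M /SU3P[_ detM]; rewrite unitmxE detM unitr1. Qed.

Lemma SU3_mul : {in G &, forall A B, A *m B \in G}.
Proof.
move=> A B /SU3P[isoA detA] /SU3P[isoB detB]; apply/SU3P.
rewrite hstarM det_mulmx detA detB mulr1 -!mulmxA (mulmxA (hstar q A)).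
by rewrite (mulmxA (hstar q A *m _)) isoA mulmxA isoB.
Qed.

Lemma SU3_inv : {in G, forall A, invmx A \in G}.
Proof.
move=> A AG; have uA := SU3_unitmx AG; case/SU3P: AG => isoA detA.
apply/SU3P; rewrite det_inv detA invr1; split=> //.
have hstarV : hstar q (invmx A) *m hstar q A = 1%:M.
  by rewrite -hstarM mulmxV // hstar1.
by rewrite -{1}isoA !mulmxA hstarV mul1mx mulmxK.
Qed.

Lemma SU3_group : mx_group G.
Proof. by split; [apply: SU3_unitmx | apply: SU3_mul | apply: SU3_inv]. Qed.

Local Ltac qconj_simpl :=
  rewrite ?(rmorphD, rmorphB, rmorphN, rmorphM, fmorphV, rmorph1, rmorph0) /= ?qconjK.

Lemma Jmx_mx3 : Jmx F = mx3 0 0 1 0 1 0 1 0 0.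
Proof. by rewrite [LHS]mx3_eta !mxE. Qed.

Definition unip b d : 'M[F]_3 := mx3 1 b d 0 1 (- bar b) 0 0 1.
Definition torus a : 'M[F]_3 := mx3 a 0 0 0 (bar a / a) 0 0 0 (bar a)^-1.
Definition weyl : 'M[F]_3 := mx3 0 0 1 0 (-1) 0 1 0 0.
(* [g *m E11] keeps only the first column of [g], so [g *m E11 = c *: E11]
   says that [g] maps e1 to [c e1]. *)
Definition E11 : 'M[F]_3 := mx3 1 0 0 0 0 0 0 0 0.
Definition line1_stable (g : 'M[F]_3) := (g o1 o0 == 0) && (g o2 o0 == 0).

Lemma unip_SU3E b d : (unip b d \in G) = (d + bar d + b * bar b == 0).
Proof.
rewrite /unip; apply/SU3P/eqP; rewrite hstar_mx3 Jmx_mx3 !mul_mx3 det_mx3.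
  by case=> /mx3_inj[_ _ [_ _ <-]] _; qconj_simpl; ring.
move=> norm; have normd : bar d = - d - b * bar b.
  by rewrite -[bar d]subr0 -norm; ring.
by split; [apply: mx3_eq; qconj_simpl; rewrite ?normd; ring | ring].
Qed.

Lemma torus_SU3 a : a != 0 -> torus a \in G.
Proof.
move=> a0; have ca0 : bar a != 0 by rewrite fmorph_eq0.
apply/SU3P; rewrite /torus hstar_mx3 Jmx_mx3 !mul_mx3 det_mx3.
by split; [apply: mx3_eq; qconj_simpl | idtac]; field; rewrite ?a0 ?ca0.
Qed.

Lemma weyl_SU3 : weyl \in G.
Proof.
apply/SU3P; rewrite /weyl hstar_mx3 Jmx_mx3 !mul_mx3 det_mx3.
by split; [apply: mx3_eq; qconj_simpl | idtac]; ring.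
Qed.

Lemma unipM b d c e : unip b d *m unip c e = unip (b + c) (d + e - b * bar c).
Proof. by rewrite /unip mul_mx3; apply: mx3_eq; qconj_simpl; ring. Qed.

Lemma line1_stableE g : line1_stable g -> g *m E11 = g o0 o0 *: E11.
Proof.
case/andP=> /eqP g10 /eqP g20; rewrite [g in LHS]mx3_eta /E11 mul_mx3 scale_mx3.
by rewrite g10 g20; apply: mx3_eq; ring.
Qed.

Lemma line1_stableP g c : g *m E11 = c *: E11 -> line1_stable g.
Proof.
move=> gE; apply/andP; move: gE; rewrite {1}(mx3_eta g) /E11 mul_mx3 scale_mx3.
by case/mx3_inj=> _ [+ _ _] [+ _ _]; rewrite !mulr1 !mulr0 !addr0 => -> ->.
Qed.

Lemma line1_stableV g : g \in G -> line1_stable g -> line1_stable (invmx g).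
Proof.
move=> gG /line1_stableE gE; have ug := SU3_unitmx gG.
have g00 : g o0 o0 != 0.
  apply/eqP => g00; have := mulKmx ug E11; rewrite gE g00 scale0r mulmx0.
  by move/matrixP/(_ o0 o0); rewrite !mxE /= => /eqP; rewrite eq_sym oner_eq0.
have E11E : E11 = (g o0 o0)^-1 *: (g *m E11) by rewrite gE scalerA mulVf ?scale1r.
by apply: (@line1_stableP _ (g o0 o0)^-1); rewrite {1}E11E -scalemxAr mulKmx.
Qed.

Lemma SU3_fix_E11 a b c d e f g h i : mx3 a b c d e f g h i \in G ->
  mx3 a b c d e f g h i *m E11 = E11 -> mx3 a b c d e f g h i = unip b c.
Proof.
rewrite /E11 mul_mx3 => /SU3P[]; rewrite !mulr1 !mulr0 !addr0.
move=> + + /mx3_inj[[a1 _ _] [d0 _ _] [g0 _ _]]; subst a d g.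
rewrite hstar_mx3 Jmx_mx3 !mul_mx3 det_mx3 => /mx3_inj[_ [E10 _ E12] [E20 _ _]] det1.
have h0 : h = 0.
  by apply/eqP; rewrite -(fmorph_eq0 bar); apply/eqP; rewrite -E10; qconj_simpl; ring.
have i1 : i = 1.
  have bar_i : bar i = 1 by rewrite -E20; ring.
  by rewrite -[i]qconjK bar_i rmorph1.
have e1 : e = 1 by rewrite -det1 h0 i1; ring.
have f_b : f = - bar b by rewrite -[f]subr0 -E12 h0 i1 e1; qconj_simpl; ring.
by rewrite /unip h0 i1 e1 f_b.
Qed.

Section Irreducibility.
Variable alpha : F.
Hypothesis qconj_div_sqr_surj :
  forall b : F, b != 0 -> exists2 a : F, a != 0 & bar a / a ^+ 2 = b.
Hypothesis alpha_neq0 : alpha != 0.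
Hypothesis alpha_trace : alpha + bar alpha + 1 = 0.

Local Notation x := (u3 alpha).
Local Notation C := (mx_class G x).

Lemma qconj_alpha : bar alpha = -1 - alpha.
Proof. by rewrite -[bar alpha]subr0 -alpha_trace; ring. Qed.

Lemma u3_unip : x = unip 1 alpha.
Proof. by rewrite [LHS]mx3_eta /unip rmorph1 !mxE. Qed.

Lemma u3_SU3 : x \in G.
Proof. by rewrite u3_unip unip_SU3E rmorph1 mulr1 alpha_trace. Qed.

Lemma u3_torus a : a != 0 ->
  x *m torus a = torus a *m unip (bar a / a ^+ 2) (alpha / (a * bar a)).
Proof.
move=> a0; have ca0 : bar a != 0 by rewrite fmorph_eq0.
rewrite u3_unip /torus /unip !mul_mx3; apply: mx3_eq; qconj_simpl;
  by field; rewrite ?a0 ?ca0.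
Qed.

Lemma unip_alpha_SU3 c : unip c (alpha * (c * bar c)) \in G.
Proof.
rewrite unip_SU3E; qconj_simpl; apply/eqP.
by rewrite -[RHS](mulr0 (c * bar c)) -alpha_trace; ring.
Qed.

Lemma u3_conj_unip b d : b != 0 -> d + bar d + b * bar b = 0 ->
  exists k, [/\ k \in G, line1_stable k & x *m k = k *m unip b d].
Proof.
move=> b0 norm; have normd : bar d = - d - b * bar b.
  by rewrite -[bar d]subr0 -norm; ring.
have [a a0 ab] := qconj_div_sqr_surj b0; have ca0 : bar a != 0 by rewrite fmorph_eq0.
(* c makes c * bar b - b * bar c equal to d - alpha / (a * bar a), which
   turns x^(torus a) into u(b,d); the choice of e puts unip c e in G. *)
pose c := - alpha * (d - alpha / (a * bar a)) / bar b.
pose e := alpha * (c * bar c).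
have ceG : unip c e \in G := unip_alpha_SU3 c.
exists (torus a *m unip c e); split.
- by rewrite SU3_mul ?torus_SU3.
- by rewrite /line1_stable /torus /unip mul_mx3 !mxE /= !(mulr0, mul0r, addr0) eqxx.
rewrite mulmxA u3_torus // -!mulmxA !unipM; congr (_ *m _).
rewrite /unip; apply: mx3_eq => //; rewrite /e /c; qconj_simpl; rewrite ?normd -?ab;
  by qconj_simpl; rewrite ?qconj_alpha; field; rewrite ?a0 ?ca0.
Qed.

Lemma unip_mem_class b d : b != 0 -> d + bar d + b * bar b = 0 -> unip b d \in C.
Proof.
move=> b0 norm; have [k [kG _ xk]] := u3_conj_unip b0 norm.
by rewrite -(mulKmx (SU3_unitmx kG) (unip b d)) -xk mulmxA mem_mx_class.
Qed.

Lemma cent_meets_fix_E11 y : y \in G -> y *m E11 = E11 -> cent_meets G C y.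
Proof.
move=> yG yE; rewrite [y]mx3_eta in yG yE *.
have yU := SU3_fix_E11 yG yE; move: yG; rewrite {yE}yU.
move: (y o0 o1) (y o0 o2) => b d; rewrite unip_SU3E => /eqP norm.
have [-> | b0] := eqVneq b 0; last first.
  by apply: (cent_meets_intro SU3_group u3_SU3 (unip_mem_class b0 norm)).
apply: (cent_meets_intro SU3_group u3_SU3 (mx_class_refl SU3_group u3_SU3)).
by rewrite u3_unip !unipM rmorph0 rmorph1; congr unip; ring.
Qed.

Lemma cent_meets_fix_isotropic y g : y \in G -> g \in G ->
  y *m (g *m E11) = g *m E11 -> cent_meets G C y.
Proof.
move=> yG gG yE; have ug := SU3_unitmx gG.
have ygE : (y ^^ g) *m E11 = E11 by rewrite -!mulmxA yE mulKmx.
have ygG : y ^^ g \in G by rewrite !SU3_mul ?SU3_inv.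
have := cent_meets_conj SU3_group u3_SU3 (cent_meets_fix_E11 ygG ygE) (SU3_inv gG).
by rewrite invmxK !mulmxA mulmxV // mul1mx mulmxK.
Qed.

Lemma u3_fix_E11 : x *m E11 = E11.
Proof. by rewrite u3_unip /unip /E11 mul_mx3; apply: mx3_eq; ring. Qed.

Lemma class_linked_line1 g : g \in G -> line1_stable g -> class_linked G x g.
Proof.
move=> gG /line1_stableE gE; have xgC := mem_mx_class x gG.
have xgE : (x ^^ g) *m E11 = E11.
  have := mulKmx (SU3_unitmx gG) E11; rewrite gE -scalemxAr => gVE.
  by rewrite -!mulmxA gE -!scalemxAr u3_fix_E11 gVE.
rewrite /class_linked; have [<-|xg_neq] := eqVneq x (x ^^ g); first exact: connect0.
apply: connect1; apply/and4P; split => //; first exact: mx_class_refl SU3_group u3_SU3.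
apply: cent_meets_fix_E11; last by rewrite -(mulmxA x) xgE u3_fix_E11.
by rewrite SU3_mul ?u3_SU3 ?(mx_class_sub SU3_group u3_SU3).
Qed.

Lemma invmx_weyl : invmx weyl = weyl.
Proof.
have weyl2 : weyl *m weyl = 1%:M by rewrite /weyl mul_mx3 mx3_1; apply: mx3_eq; ring.
by rewrite -[LHS]mulmx1 -weyl2 mulmxA mulVmx ?SU3_unitmx ?weyl_SU3 ?mul1mx.
Qed.

Lemma class_linked_weyl : class_linked G x weyl.
Proof.
pose n := alpha * bar alpha; pose b := (n * alpha)^-1; pose d := b * bar b * bar alpha.
have ca0 : bar alpha != 0 by rewrite fmorph_eq0.
have na0 : -1 - alpha != 0 by rewrite -qconj_alpha.
have b0 : b != 0 by rewrite invr_eq0 !mulf_neq0.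
have d0 : d != 0 by rewrite !mulf_neq0 // fmorph_eq0.
have norm : d + bar d + b * bar b = 0.
  by rewrite /d /b /n; qconj_simpl; rewrite qconj_alpha; field; rewrite alpha_neq0 na0.
have [k [kG k_stable xk]] := u3_conj_unip b0 norm.
have uk := SU3_unitmx kG.
have kwG : k *m weyl \in G by rewrite SU3_mul ?weyl_SU3.
have x_kw : x ^^ (k *m weyl) = weyl *m unip b d *m weyl.
  rewrite invmxM ?SU3_unitmx ?weyl_SU3 // invmx_weyl !mulmxA -(mulmxA _ x) xk.
  by rewrite !mulmxA -(mulmxA weyl (invmx k) k) mulVmx // mulmx1.
have linked_kw : class_linked G x (k *m weyl).
  rewrite /class_linked x_kw; apply: connect1; apply/and4P; split.
  - exact: mx_class_refl SU3_group u3_SU3.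
  - by rewrite -x_kw mem_mx_class.
  - apply/eqP => /(congr1 (fun M : 'M[F]_3 => M o2 o0)).
    rewrite u3_unip /weyl /unip !mul_mx3 !mxE /= => x20.
    by move/eqP: d0; apply; rewrite x20; ring.
  (* x x^(kW) fixes the isotropic vector v e1. *)
  have vG : unip (- alpha) (n * bar alpha) *m weyl \in G.
    rewrite SU3_mul ?weyl_SU3 // unip_SU3E /n; qconj_simpl; apply/eqP.
    by rewrite -[RHS](mulr0 n) -alpha_trace /n; ring.
  apply: (cent_meets_fix_isotropic _ vG).
    by rewrite SU3_mul ?u3_SU3 // -x_kw (mx_class_sub SU3_group u3_SU3) ?mem_mx_class.
  rewrite u3_unip /weyl /unip /E11 !mul_mx3; apply: mx3_eq; rewrite /d /b /n;
    by qconj_simpl; rewrite ?qconj_alpha; field; rewrite ?alpha_neq0 ?na0.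
have := class_linkedM SU3_group u3_SU3 (SU3_inv kG) kwG
  (class_linked_line1 (SU3_inv kG) (line1_stableV kG k_stable)) linked_kw.
by rewrite mulmxA mulVmx // mul1mx.
Qed.

Lemma SU3_isotropic_col g : g \in G ->
  bar (g o0 o0) * g o2 o0 + bar (g o1 o0) * g o1 o0 + bar (g o2 o0) * g o0 o0 = 0.
Proof.
rewrite [g in g \in G]mx3_eta => /SU3P[+ _].
by rewrite hstar_mx3 Jmx_mx3 !mul_mx3 => /mx3_inj[[<- _ _] _ _]; ring.
Qed.

Lemma class_linked_SU3 g : g \in G -> class_linked G x g.
Proof.
move=> gG; have iso := SU3_isotropic_col gG.
have [g20|g20] := eqVneq (g o2 o0) 0.
  apply: class_linked_line1 => //; rewrite /line1_stable g20 eqxx andbT.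
  move: iso; rewrite g20 rmorph0 !(mulr0, mul0r, add0r, addr0) => /eqP.
  by rewrite mulf_eq0 fmorph_eq0 orbb.
have cg20 : bar (g o2 o0) != 0 by rewrite fmorph_eq0.
(* Bruhat: g = k (k^-1 g) with k := u(b,d) weyl and k^-1 g stabilising <e1>. *)
pose b := - bar (g o1 o0 / g o2 o0); pose d := g o0 o0 / g o2 o0.
have norm : d + bar d + b * bar b = 0.
  rewrite /b /d; qconj_simpl; rewrite -[RHS](mul0r (g o2 o0 * bar (g o2 o0))^-1) -iso.
  by field; rewrite g20 cg20.
have unipG : unip b d \in G by rewrite unip_SU3E norm.
pose k := unip b d *m weyl.
have kG : k \in G by rewrite SU3_mul ?weyl_SU3.
have gE : g *m E11 = g o2 o0 *: (k *m E11).
  rewrite {1}(mx3_eta g) /k /unip /weyl /E11 !mul_mx3 scale_mx3 /b /d; qconj_simpl.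
  by apply: mx3_eq; field; rewrite ?g20.
have kgG : invmx k *m g \in G by rewrite SU3_mul ?SU3_inv.
have kg_stable : line1_stable (invmx k *m g).
  apply: (@line1_stableP _ (g o2 o0)).
  by rewrite -mulmxA gE -scalemxAr mulKmx ?SU3_unitmx.
have unip_stable : line1_stable (unip b d) by rewrite /line1_stable !mxE /= eqxx.
have linked_k : class_linked G x k := class_linkedM SU3_group u3_SU3 unipG weyl_SU3
  (class_linked_line1 unipG unip_stable) class_linked_weyl.
have := class_linkedM SU3_group u3_SU3 kG kgG linked_k (class_linked_line1 kgG kg_stable).
by rewrite mulmxA mulmxV ?SU3_unitmx // mul1mx.
Qed.

Lemma SU3_class_killing_irreducible : killing_irreducible G C.
Proof. exact: killing_irreducible_linked SU3_group u3_SU3 class_linked_SU3. Qed.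

End Irreducibility.

End SU3.

Lemma coprime_sub2_pred_sqr q : (2 < q)%N -> (q %% 3 != 2)%N ->
  coprime (q - 2) (q ^ 2).-1.
Proof.
move=> q_gt2 q_mod3.
have -> : (q ^ 2).-1 = ((q + 2) * (q - 2) + 3)%N by rewrite expnS expn1; nia.
rewrite /coprime gcdnMDl -/(coprime _ _) coprime_sym prime_coprime //.
by apply/negP => /dvdnP[k q_k]; move/eqP: q_mod3; apply; lia.
Qed.

Lemma expf_coprime_surj (F : finFieldType) m : (0 < m)%N -> coprime m #|F|.-1 ->
  forall b : F, b != 0 -> exists2 a : F, a != 0 & a ^+ m = b.
Proof.
move=> m_gt0 co_m b b0; have [u v uv _] := egcdnP #|F|.-1 m_gt0.
have b_unity : b ^+ #|F|.-1 = 1.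
  by apply: (mulfI b0); rewrite mulr1 -exprS (ltn_predK (finNzRing_gt1 F)) expf_card.
exists (b ^+ u); first by rewrite expf_neq0.
by rewrite -exprM uv (eqP co_m) exprD mulnC exprM b_unity expr1n mul1r expr1.
Qed.

Theorem corollary4p11 (q : nat) (F : finFieldType) (alpha : F) :
  prime_power q ->
  (q %% 3 != 2)%N ->
  #|F| = (q ^ 2)%N ->
  alpha != 0 ->
  alpha + alpha ^+ q + 1 = 0 ->
  killing_irreducible (SU3 F q) (mx_class (SU3 F q) (u3 alpha)).
Proof.
move=> [p [k [p_prime k_gt0 qE]]] q_mod3 cardF alpha_neq0 alpha_trace.
have pF : p \in [pchar F].
  by apply: (@card_finPcharP _ p (k * 2)); rewrite // cardF qE expnM.
have q_pchar : [pchar F].-nat q.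
  by rewrite (eq_pnat _ (pcharf_eq pF)) qE pnatX pnat_id.
have q_gt2 : (2 < q)%N.
  have := finNzRing_gt1 F; rewrite cardF; move: q_mod3.
  by case: (q) => [|[|[|n]]].
apply: SU3_class_killing_irreducible => // b b0.
have q2_gt0 : (0 < q - 2)%N by rewrite subn_gt0.
have co_q2 : coprime (q - 2) #|F|.-1 by rewrite cardF coprime_sub2_pred_sqr.
have [a a0 ab] := expf_coprime_surj q2_gt0 co_q2 b0.
by exists a; rewrite // /qconj -expfB.
Qed.
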